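(* Let $M,N,L$ be weight sequences satisfying $m_k^{1/k}\to\infty$, $n_k^{1/k}\to\infty$, $\ell_k^{1/k}\to\infty$. Assume that there is $A>0$ with $\mu_{2k}\le A\nu_k$ for all $k$, and that there is $C\ge1$ with $\frac{\nu_j}{j}\le C\frac{\lambda_k}{k}$ for all $1\le j\le k$. Then there exists $D\ge1$ such that $2\underline{\Gamma}_\ell(Dt)\le\underline{\Gamma}_m(t)$ for all $t>0$.
   Context: A weight sequence is given by an increasing sequence $1=\mu_0\le\mu_1\le\cdots$ via $M_k=\mu_0\cdots\mu_k=k!\,m_k$, with $M_k^{1/k}\to\infty$; analogously $\nu\leftrightarrow N\leftrightarrow n$ and $\lambda\leftrightarrow L\leftrightarrow\ell$. For a positive sequence $m$ with $m_0=1$ and $m_{k+1}/m_k\to\infty$, $\underline{\Gamma}_m(t)=\min\{k: m_{k+1}/m_k\ge1/t\}$ for $t>0$. *)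

From Stdlib Require Import Reals Lra Lia.
Open Scope R_scope.

Fixpoint bigM (mu : nat -> R) (k : nat) : R :=
  match k with
  | O => mu O
  | S k' => bigM mu k' * mu (S k')
  end.

Definition smallm (mu : nat -> R) (k : nat) : R := bigM mu k / INR (Factorial.fact k).

Definition weight_seq (mu : nat -> R) : Prop :=
  mu O = 1 /\ (forall k, mu k <= mu (S k)) /\
  cv_infty (fun k => Rpower (bigM mu k) (/ INR k)).

Definition Gamma_lower_is (m : nat -> R) (t : R) (k : nat) : Prop :=
  m (S k) / m k >= / t /\ (forall j, (j < k)%nat -> m (S j) / m j < / t).

(* Since m_{k+1}/m_k = mu_{k+1}/(k+1), the index Gamma_m(t) is the first k with
   mu_{k+1}/(k+1) >= 1/t.  If 2 Gamma_l(Dt) > Gamma_m(t) = k, take q = ceil((k+1)/2),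
   so 1 <= q <= Gamma_l(Dt) and q <= k+1 <= 2q.  Then
   1/t <= mu_{k+1}/(k+1) <= mu_{2q}/q <= A nu_q/q <= AC lambda_q/q,
   whereas lambda_q/q < 1/(Dt) by minimality of Gamma_l(Dt), which fails for D = AC + 1. *)
From Stdlib Require Import Reals Lra Lia.
Open Scope R_scope.

Lemma bigM_pos (mu : nat -> R) :
  mu O = 1 -> Un_growing mu -> forall k, 0 < bigM mu k.
Proof.
intros mu0 mu_grow k; induction k as [|k IHk]; simpl.
- lra.
- pose proof (tech9 mu mu_grow 0 (S k) ltac:(lia)). nra.
Qed.

Lemma smallm_ratio (mu : nat -> R) (k : nat) :
  bigM mu k <> 0 -> smallm mu (S k) / smallm mu k = mu (S k) / INR (S k).
Proof.
intro Mk_neq0. unfold smallm. simpl bigM.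
change (Factorial.fact (S k)) with (S k * Factorial.fact k)%nat.
rewrite mult_INR.
pose proof (INR_fact_lt_0 k).
assert (0 < INR (S k)) by (apply lt_0_INR; lia).
field. repeat split; lra.
Qed.

Lemma Gamma_lower_is_weight_seq (mu : nat -> R) (t : R) (k : nat) :
  weight_seq mu -> Gamma_lower_is (smallm mu) t k ->
  / t <= mu (S k) / INR (S k) /\
  (forall j, (j < k)%nat -> mu (S j) / INR (S j) < / t).
Proof.
intros [mu0 [mu_grow _]] [Gk Gmin].
assert (ratio : forall j, smallm mu (S j) / smallm mu j = mu (S j) / INR (S j)).
{ intro j. apply smallm_ratio. pose proof (bigM_pos mu mu0 mu_grow j). lra. }
split.
- rewrite <- ratio. lra.
- intros j hj. rewrite <- ratio. exact (Gmin j hj).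
Qed.

Lemma half_ceiling_index (n k : nat) :
  (n < 2 * k)%nat -> exists q, (1 <= q <= k)%nat /\ (q <= S n <= 2 * q)%nat.
Proof.
intro hnk. exists ((n + 2) / 2)%nat.
pose proof (Nat.div_mod (n + 2) 2 ltac:(lia)).
pose proof (Nat.mod_upper_bound (n + 2) 2 ltac:(lia)).
lia.
Qed.

Lemma mu_double_le (mu nu lam : nat -> R) (A C : R) (q : nat) :
  0 <= A -> (forall k, mu (2 * k)%nat <= A * nu k) ->
  (forall j k, (1 <= j)%nat -> (j <= k)%nat -> nu j / INR j <= C * (lam k / INR k)) ->
  (1 <= q)%nat -> mu (2 * q)%nat <= A * C * lam q.
Proof.
intros A_ge0 mu_nu nu_lam hq.
assert (q_pos : 0 < INR q) by (apply lt_0_INR; lia).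
assert (nu_le : nu q <= C * lam q).
{ pose proof (nu_lam q q hq (Nat.le_refl q)) as h.
  apply Rmult_le_compat_r with (r := INR q) in h; [|lra].
  replace (nu q / INR q * INR q) with (nu q) in h by (field; lra).
  replace (C * (lam q / INR q) * INR q) with (C * lam q) in h by (field; lra).
  exact h. }
specialize (mu_nu q). rewrite Rmult_assoc. nra.
Qed.

Lemma div_le_div_INR (a b : R) (p q : nat) :
  0 <= b -> (1 <= q <= p)%nat -> a <= b -> a / INR p <= b / INR q.
Proof.
intros b_ge0 hqp hab.
assert (q_pos : 0 < INR q) by (apply lt_0_INR; lia).
assert (INR q <= INR p) by (apply le_INR; lia).
apply Rle_trans with (b / INR p).
- apply Rmult_le_compat_r; [apply Rlt_le, Rinv_0_lt_compat|]; lra.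
- apply Rmult_le_compat_l; [lra|]. apply Rinv_le_contravar; lra.
Qed.

Lemma inv_succ_scaled_le (K t x : R) :
  0 <= K -> 0 < t -> / t <= K * x -> / ((K + 1) * t) <= x.
Proof.
intros K_ge0 t_pos h.
assert (1 <= K * x * t).
{ apply Rmult_le_compat_r with (r := t) in h; [|lra].
  rewrite Rinv_l in h by lra. lra. }
apply Rmult_le_reg_l with ((K + 1) * t); [nra|].
rewrite Rinv_r by nra. nra.
Qed.

Theorem lemma3p4 (mu nu lam : nat -> R) :
  weight_seq mu -> weight_seq nu -> weight_seq lam ->
  cv_infty (fun k => Rpower (smallm mu k) (/ INR k)) ->
  cv_infty (fun k => Rpower (smallm nu k) (/ INR k)) ->
  cv_infty (fun k => Rpower (smallm lam k) (/ INR k)) ->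
  (exists A, 0 < A /\ forall k, mu (2 * k)%nat <= A * nu k) ->
  (exists C, 1 <= C /\ forall j k, (1 <= j)%nat -> (j <= k)%nat ->
       nu j / INR j <= C * (lam k / INR k)) ->
  exists D, 1 <= D /\ forall t, 0 < t ->
    forall kl km, Gamma_lower_is (smallm lam) (D * t) kl ->
                  Gamma_lower_is (smallm mu) t km ->
                  (2 * kl <= km)%nat.
Proof.
intros wmu _ wlam _ _ _ [A [A_pos mu_nu]] [C [C_ge1 nu_lam]].
exists (A * C + 1). split; [nra|].
intros t t_pos kl km Gl Gm.
destruct (Compare_dec.le_lt_dec (2 * kl) km) as [done|km_lt]; [exact done|exfalso].
destruct (half_ceiling_index km kl km_lt) as [q [[q_ge1 q_le_kl] [q_le_Skm Skm_le_2q]]].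
destruct (Gamma_lower_is_weight_seq mu t km wmu Gm) as [mu_ratio_ge _].
destruct (Gamma_lower_is_weight_seq lam (_ * t) kl wlam Gl) as [_ lam_ratio_lt].
specialize (lam_ratio_lt (q - 1)%nat ltac:(lia)).
replace (S (q - 1)) with q in lam_ratio_lt by lia.
destruct wmu as [_ [mu_grow _]]; destruct wlam as [lam0 [lam_grow _]].
assert (lam_ge0 : 0 <= lam q) by (pose proof (tech9 lam lam_grow 0 q ltac:(lia)); lra).
assert (AC_ge0 : 0 <= A * C) by nra.
assert (mu_le : mu (S km) <= A * C * lam q).
{ apply Rle_trans with (mu (2 * q)%nat); [exact (tech9 mu mu_grow _ _ Skm_le_2q)|].
  exact (mu_double_le mu nu lam A C q (Rlt_le _ _ A_pos) mu_nu nu_lam q_ge1). }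
pose proof (div_le_div_INR _ _ (S km) q
  (Rmult_le_pos _ _ AC_ge0 lam_ge0) ltac:(lia) mu_le) as ratio_le.
replace (A * C * lam q / INR q) with (A * C * (lam q / INR q)) in ratio_le
  by (unfold Rdiv; ring).
pose proof (inv_succ_scaled_le (A * C) t (lam q / INR q) AC_ge0 t_pos
              (Rle_trans _ _ _ mu_ratio_ge ratio_le)).
lra.
Qed.
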